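(* Fix integers $T\ge 3$, $\Delta t\ge 1$ and probabilities $p_0,q_0\in(0,1)$, and consider observations $y^1,\dots,y^T$ generated by the relaxed change model described in the context. For $3\le t\le T$, $0\le r\le t-3$ and $0\le r'\le\min\{\Delta t-1,\,t-r-3\}$ define $$\mathbb{G}^t_a(r',r)=\Pr\big(\bm{y}^{1:t},\ r^t=r,\ a^{t-r}=1,\ c^{t-r-1-r'}=1,\ c^s=0 \text{ for all } t-r-1-r'<s<t-r\big),$$ i.e. the most recent change is at time $t-r$ and ends a collective anomaly whose start (the preceding change) is at time $(t-r-1)-r'$. Then $\mathbb{G}^3_a(0,0)=\mathbb{L}(y^1)\mathbb{L}(y^2)\mathbb{L}(y^3)\,p_0q_0$, and for every $3<t\le T$: $$\mathbb{G}^t_a(r',r)=\begin{cases}\mathbb{G}^{t-1}_a(r',r-1)\,\mathbb{P}(y^t\mid\bm{y}^{(t-r):(t-1)})\,(1-p_0), & r>0,\\ \mathbb{H}^{t-1}_c(r')\,\mathbb{L}(y^t)\,q_0, & r=0,\end{cases}$$ where $\mathbb{H}^{t-1}_c(r')=\Pr(\bm{y}^{1:(t-1)},\,r^{t-1}=r',\,a^{t-1-r'}=0)$.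
   Context: Relaxed change model: binary variables $c^t,a^t$ ($t=1,\dots,T$) with $c^1=1$, $a^1=0$. For $t>1$, call $t$ ''open'' if there is $t'\in\{t-\Delta t,\dots,t-1\}\setminus\{1\}$, $t'\ge 1$, with $c^{t'}=1$, $a^{t'}=0$ and $c^s=0$ for all $t'<s\le t-1$. Given the past, $c^t=1$ with probability $q_0$ if $t$ is open and $p_0$ otherwise; $a^t=1$ if $c^t=1$ and $t$ is open, and $a^t=0$ otherwise. Given a parametric density family $\Pr(y\mid\theta)$ and a prior $\Pr(\theta\mid\pi_0)$: $\theta^1$ is drawn from the prior; for $t>1$, $\theta^t=\theta^{t-1}$ if $c^t=0$, and $\theta^t$ is drawn independently from the prior if $c^t=1$; given $\theta^t$, $y^t\sim\Pr(\cdot\mid\theta^t)$ independently. $\Pr(\bm{y}^{1:t},E)$ denotes the joint density of $y^1,\dots,y^t$ together with the event $E$. Marginal likelihoods: for $1\le a\le b$, $\mathbb{L}(\bm{y}^{a:b})=\int\prod_{s=a}^b\Pr(y^s\mid\theta)\Pr(\theta\mid\pi_0)\,d\theta$ (with $\mathbb{L}(y^b)=\mathbb{L}(\bm{y}^{b:b})$), and for $a<b$, $\mathbb{P}(y^b\mid\bm{y}^{a:(b-1)})=\mathbb{L}(\bm{y}^{a:b})/\mathbb{L}(\bm{y}^{a:(b-1)})$. Run length: $r^t=t-\max\{s\le t: c^s=1\}$. *)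

From HB Require Import structures.
From mathcomp Require Import all_boot all_order all_algebra.
From mathcomp Require Import all_classical all_reals all_analysis.
Set Implicit Arguments. Unset Strict Implicit. Unset Printing Implicit Defensive.
Import Order.TTheory GRing.Theory Num.Theory.

(* Relaxed change model: the change indicators c^1..c^t are encoded by    *)
(* a function c : nat -> bool (only times 1..t matter).                   *)

Definition is_open (Dt : nat) (c A : nat -> bool) (t : nat) : bool :=
  [exists t' : 'I_t, [&& (2 <= t')%N, (t - Dt <= t')%N, c t', ~~ A t' &
      [forall s : 'I_t, (t' < s)%N ==> ~~ c s]]].

(* aux Dt c n s = a^s for all s <= n (computed recursively in time). *)
Fixpoint aux (Dt : nat) (c : nat -> bool) (n : nat) : nat -> bool :=
  match n with
  | 0 => fun _ => false
  | n'.+1 => let A := aux Dt c n' in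
             fun s => if s == n'.+1 then c s && is_open Dt c A s else A s
  end.

Definition anom (Dt : nat) (c : nat -> bool) (t : nat) : bool := aux Dt c t t.

Definition openb (Dt : nat) (c : nat -> bool) (t : nat) : bool :=
  is_open Dt c (aux Dt c t.-1) t.

Definition runlen (c : nat -> bool) (t : nat) : nat :=
  (t - \max_(s < t.+1 | c s) s)%N.

Local Open Scope ring_scope.

Definition cprob {R : realType} (Dt : nat) (p0 q0 : R) (c : nat -> bool)
  (t : nat) : R :=
  \prod_(1 <= s < t.+1)
    (if s == 1%N then (if c s then 1 else 0)
     else if openb Dt c s then (if c s then q0 else 1 - q0)
     else (if c s then p0 else 1 - p0)).

Definition mL {d : measure_display} {Th : measurableType d} {R : realType}
  {Y : Type} (prior : probability Th R) (f : Y -> Th -> R) (y : nat -> Y)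
  (a b : nat) : R :=
  Rintegral prior setT (fun th => \prod_(a <= s < b.+1) f (y s) th).

Definition mP {d : measure_display} {Th : measurableType d} {R : realType}
  {Y : Type} (prior : probability Th R) (f : Y -> Th -> R) (y : nat -> Y)
  (a b : nat) : R :=
  mL prior f y a b / mL prior f y a b.-1.

(* end of the segment starting at change time s (within 1..t) *)
Definition segend (c : nat -> bool) (t s : nat) : nat :=
  (s + find c (iota s.+1 (t - s)))%N.

(* Density of y^{1:t} given the change configuration c^{1:t}: the        *)
(* parameter is constant on segments between changes and drawn           *)
(* independently from the prior at each change, so the conditional       *)
(* density is the product over segments of their marginal likelihoods.   *)
Definition ylik {d : measure_display} {Th : measurableType d} {R : realType}
  {Y : Type} (prior : probability Th R) (f : Y -> Th -> R) (y : nat -> Y)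
  (c : nat -> bool) (t : nat) : R :=
  \prod_(1 <= s < t.+1 | c s) mL prior f y s (segend c t s).

(* configuration c^{1:t} encoded by a t-tuple: c^s = cs_(s-1) *)
Definition cfun (t : nat) (cs : t.-tuple bool) : nat -> bool :=
  fun s => (0 < s)%N && nth false cs s.-1.

Definition joint {d : measure_display} {Th : measurableType d} {R : realType}
  {Y : Type} (Dt : nat) (p0 q0 : R) (prior : probability Th R)
  (f : Y -> Th -> R) (y : nat -> Y) (t : nat) (E : (nat -> bool) -> bool) : R :=
  \sum_(cs : t.-tuple bool)
    (if E (cfun cs) then cprob Dt p0 q0 (cfun cs) t * ylik prior f y (cfun cs) t
     else 0).

Definition Ga {d : measure_display} {Th : measurableType d} {R : realType}
  {Y : Type} (Dt : nat) (p0 q0 : R) (prior : probability Th R)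
  (f : Y -> Th -> R) (y : nat -> Y) (t r' r : nat) : R :=
  joint Dt p0 q0 prior f y t (fun c =>
    [&& runlen c t == r, anom Dt c (t - r),
        c (t - r - 1 - r')%N &
        [forall s : 'I_t, ((t - r - 1 - r' < s) && (s < t - r))%N ==> ~~ c s]]).

Definition Hc {d : measure_display} {Th : measurableType d} {R : realType}
  {Y : Type} (Dt : nat) (p0 q0 : R) (prior : probability Th R)
  (f : Y -> Th -> R) (y : nat -> Y) (t r' : nat) : R :=
  joint Dt p0 q0 prior f y t (fun c =>
    (runlen c t == r') && ~~ anom Dt c (t - r')).

From Pilot Require Import Defs.
From HB Require Import structures.
From mathcomp Require Import all_boot all_order all_algebra.
From mathcomp Require Import all_classical all_reals all_analysis.
From mathcomp Require Import zify ring.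
Import Order.TTheory GRing.Theory Num.Theory.

(* Split the joint density over the last indicator c^t.  A configuration
   c^{1:t} is c^{1:(t-1)} extended by c^t: its probability gains the factor of
   c^t (q0 or 1 - q0 if t is open, p0 or 1 - p0 otherwise) and its likelihood
   either gains the new segment L(y^t) (c^t = 1) or lengthens the last segment,
   L(y^{(t-r):t}) = L(y^{(t-r):(t-1)}) P(y^t | y^{(t-r):(t-1)}) (c^t = 0).
   For r = 0 the event of G^t_a forces c^t = 1 and t open; as the last change
   t-1-r' is within Dt steps, t is open iff a^{t-1-r'} = 0, which is the event
   of H^{t-1}_c(r').  For r > 0 it forces c^t = 0 and becomes the event of
   G^{t-1}_a(r', r-1); t is then not open, the last change being an anomaly
   end, whence the factor 1 - p0. *)

Section ChangeIndicators.
Context {Dt : nat}.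
Implicit Types (c A : nat -> bool).

Lemma is_open_eq c c' A A' t :
  (forall u, u < t -> c u = c' u) -> (forall u, u < t -> A u = A' u) ->
  is_open Dt c A t = is_open Dt c' A' t.
Proof.
move=> eq_c eq_A; apply: eq_existsb => u.
rewrite eq_c ?eq_A //; congr [&& _, _, _, _ & _].
by apply: eq_forallb => s; rewrite eq_c.
Qed.

Lemma aux_eq c c' n : (forall s, s <= n -> c s = c' s) ->
  aux Dt c n =1 aux Dt c' n.
Proof.
elim: n => [|n IHn] eq_c s //=.
have eq_c' u : u <= n -> c u = c' u by move=> le_un; apply/eq_c/leqW.
case: eqP => [->|_]; last exact: IHn.
rewrite eq_c //; congr andb; apply: is_open_eq => [u /ltnW|u _]; first exact: eq_c.
exact: IHn eq_c' u.
Qed.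

Lemma aux_anom c n s : s <= n -> aux Dt c n s = anom Dt c s.
Proof.
elim: n => [|n IHn]; first by rewrite leqn0 => /eqP ->.
rewrite leq_eqVlt => /orP[/eqP -> //|lt_sn].
by rewrite /= (ltn_eqF lt_sn) IHn.
Qed.

Lemma anom_eq c c' n s : (forall u, u <= n -> c u = c' u) -> s <= n ->
  anom Dt c s = anom Dt c' s.
Proof.
move=> eq_c le_sn; apply: aux_eq => u le_us.
exact/eq_c/(leq_trans le_us).
Qed.

Lemma anomS c t : anom Dt c t.+1 = c t.+1 && openb Dt c t.+1.
Proof. by rewrite /anom /= eqxx. Qed.

Lemma openb_eq c c' t : (forall u, u <= t -> c u = c' u) ->
  openb Dt c t = openb Dt c' t.
Proof.
move=> eq_c; apply: is_open_eq => u lt_ut; first exact/eq_c/ltnW.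
by apply: aux_eq => s le_su; apply: eq_c; lia.
Qed.

Lemma openb_small c t : t <= 2 -> openb Dt c t = false.
Proof.
move=> le_t2; apply/negbTE/existsP => -[u /and5P[le_2u _ _ _ _]].
by have := ltn_ord u; lia.
Qed.

Lemma openb_last {c t s0} : s0 <= t -> c s0 ->
  (forall s, s0 < s <= t -> c s = false) ->
  openb Dt c t.+1 = [&& 2 <= s0, t.+1 - Dt <= s0 & ~~ anom Dt c s0].
Proof.
move=> le_s0t c_s0 no_change; rewrite /openb /= -(@aux_anom c t s0 le_s0t).
apply/existsP/and3P => [[u /and5P[le_2u le_u c_u A_u /forallP after_u]]|].
  suff <- : nat_of_ord u = s0 by rewrite le_2u le_u A_u.
  case: (ltngtP u s0) => // [lt_us0|lt_s0u].
    by have := after_u (Ordinal (le_s0t : s0 < t.+1)); rewrite /= lt_us0 c_s0.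
  by move: c_u; rewrite no_change // lt_s0u -ltnS ltn_ord.
case=> le_2s0 le_s0 A_s0; exists (Ordinal (le_s0t : s0 < t.+1)).
rewrite /= le_2s0 le_s0 c_s0 A_s0; apply/forallP => s; apply/implyP => lt_s0s.
by rewrite no_change // lt_s0s -ltnS ltn_ord.
Qed.

End ChangeIndicators.

Lemma forall_betweenP {t lo hi : nat} {c : nat -> bool} : hi <= t ->
  reflect (forall s, lo < s < hi -> c s = false)
          [forall s : 'I_t, (lo < s < hi) ==> ~~ c s].
Proof.
move=> le_ht; apply: (iffP forallP) => [no_c s /andP[lt_ls lt_sh]|no_c s].
  have lt_st : s < t := leq_trans lt_sh le_ht.
  by apply/negbTE; move/implyP: (no_c (Ordinal lt_st)); apply; rewrite lt_ls.
by apply/implyP => /no_c ->.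
Qed.

Lemma runlenP (c : nat -> bool) {t r : nat} : r < t ->
  reflect (c (t - r) /\ forall s, t - r < s <= t -> c s = false)
          (runlen c t == r).
Proof.
move=> lt_rt; rewrite /runlen; set M := (\max_(s < t.+1 | c s) s)%N.
have le_Mt : M <= t by apply/bigmax_leqP => s _; rewrite -ltnS.
have le_sM s : s <= t -> c s -> s <= M.
  by rewrite -ltnS => lt_st c_s; apply: (leq_bigmax_cond (Ordinal lt_st)).
apply: (iffP eqP) => [runlen_r|[c_tr no_change]].
  have -> : (t - r = M)%N by lia.
  split=> [|s /andP[lt_Ms le_st]]; last first.
    by apply: contraTF lt_Ms => /(le_sM _ le_st); rewrite ltnNge => ->.
  apply/negPn/negP => not_cM.
  suff : M <= M.-1 by lia.
  apply/bigmax_leqP => s c_s; have := le_sM s (ltn_ord s) c_s.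
  have : nat_of_ord s != M by apply: contraNneq not_cM => <-.
  lia.
have le_Mtr : M <= t - r.
  apply/bigmax_leqP => s c_s; rewrite leqNgt; apply: contraTN c_s => lt_trs.
  by rewrite no_change // lt_trs -ltnS ltn_ord.
by have := le_sM _ (leq_subr r t) c_tr; lia.
Qed.

Definition extend (c : nat -> bool) n b : nat -> bool :=
  fun s => if s == n.+1 then b else c s.

Lemma extend_le c n b s : s <= n -> extend c n b s = c s.
Proof. by move=> le_sn; rewrite /extend ltn_eqF. Qed.

Lemma extend_last c n b : extend c n b n.+1 = b.
Proof. by rewrite /extend eqxx. Qed.

Lemma anom_extend Dt c n b s : s <= n -> anom Dt (extend c n b) s = anom Dt c s.
Proof. by apply: anom_eq => u; apply: extend_le. Qed.

Lemma runlen_extend c n b :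
  runlen (extend c n b) n.+1 = if b then 0 else (runlen c n).+1.
Proof.
rewrite /runlen big_mkcond big_ord_recr /= extend_last -big_mkcond /=.
rewrite (eq_bigl (fun s : 'I_n.+1 => c s)) => [|s]; last first.
  by rewrite /= extend_le // -ltnS.
set M := (\max_(s < n.+1 | c s) s)%N.
have : M <= n by apply/bigmax_leqP => s _; rewrite -ltnS.
by case: b; lia.
Qed.

Lemma segend_no_change c t s : s <= t ->
  (forall u, s < u <= t -> c u = false) -> segend c t s = t.
Proof.
move=> le_st no_change; rewrite /segend hasNfind ?size_iota; first lia.
by apply/hasPn => u; rewrite mem_iota => u_in; rewrite no_change //; lia.
Qed.

Lemma segend_extend c n b s : s <= n ->
  segend (extend c n b) n.+1 s =
  (if has c (iota s.+1 (n - s)) then segend c n s else n + ~~ b)%N.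
Proof.
move=> le_sn; rewrite /segend.
have -> : (n.+1 - s = (n - s) + 1)%N by lia.
rewrite iotaD find_cat.
have eq_c : {in iota s.+1 (n - s), extend c n b =1 c}.
  by move=> u; rewrite mem_iota => u_in; apply: extend_le; lia.
rewrite (eq_in_has eq_c) (eq_in_find eq_c); case: ifP => // _ {eq_c}.
rewrite size_iota /= (_ : (s.+1 + (n - s) = n.+1)%N) ?extend_last; last lia.
by case: b => /=; lia.
Qed.

Definition unrcons_tuple n (T : Type) (cs : n.+1.-tuple T) : n.-tuple T * T :=
  (Tuple (belast_tupleP (thead cs) (behead_tuple cs)),
   last (thead cs) (behead cs)).

Lemma rcons_tuple_bij n (T : eqType) :
  bijective (fun p : n.-tuple T * T => rcons_tuple p.1 p.2).
Proof.
have unrconsK : cancel (@unrcons_tuple n T) (fun p => rcons_tuple p.1 p.2).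
  by move=> cs; apply: val_inj; case: cs => -[|x s] //= ?; rewrite -lastI.
have rcons_inj : injective (fun p : n.-tuple T * T => rcons_tuple p.1 p.2).
  move=> [cs1 x1] [cs2 x2] /(congr1 val) /eqP /=.
  by rewrite eqseq_rcons => /andP[/eqP/val_inj -> /eqP ->].
by exists (@unrcons_tuple n T) => //; apply: inj_can_sym unrconsK rcons_inj.
Qed.

Lemma big_tuple_rcons (V : Type) (idx : V) (op : Monoid.com_law idx) n
    (T : finType) (F : n.+1.-tuple T -> V) :
  \big[op/idx]_(cs : n.+1.-tuple T) F cs =
  \big[op/idx]_(cs : n.-tuple T) \big[op/idx]_(x : T) F (rcons_tuple cs x).
Proof.
rewrite (reindex (fun p : n.-tuple T * T => rcons_tuple p.1 p.2)) /=.
  by rewrite -(pair_bigA _ (fun cs x => F (rcons_tuple cs x))).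
exact/onW_bij/rcons_tuple_bij.
Qed.

Lemma cfun_rcons n (cs : n.-tuple bool) b :
  cfun (rcons_tuple cs b) = extend (cfun cs) n b.
Proof.
apply: boolp.funext => -[|s] //; rewrite /cfun /extend /= nth_rcons size_tuple.
rewrite eqSS; case: (ltngtP s n) => // lt_ns.
by rewrite nth_default ?size_tuple // ltnW.
Qed.

Local Open Scope ring_scope.

Lemma Rintegral_mulr_eq0 {R : realType} {d : measure_display}
    {T : measurableType d} (mu : {measure set T -> \bar R}) (g h : T -> R) :
  (forall x, 0 <= g x) -> mu.-integrable setT (fun x => (g x)%:E) ->
  mu.-integrable setT (fun x => (g x * h x)%:E) ->
  Rintegral mu setT g = 0 -> Rintegral mu setT (fun x => g x * h x) = 0.
Proof.
move=> g_ge0 int_g int_gh /eqP; rewrite fine_eq0 ?integrable_fin_num // => /eqP.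
have -> : (\int[mu]_(x in setT) (g x)%:E = \int[mu]_(x in setT) `|(g x)%:E|)%E.
  by apply: eq_integral => x _; rewrite gee0_abs // lee_fin.
move/(ae_eq_integral_abs mu measurableT (measurable_int _ int_g)) => g_ae0.
rewrite /Rintegral (ae_eq_integral (cst 0%E)) ?integral0 //.
- exact: measurable_int int_gh.
- by apply: filterS g_ae0 => x g0 /g0 /= -[->]; rewrite mul0r.
Qed.

Section Likelihood.
Context {R : realType} {d : measure_display} {Th : measurableType d}
  {prior : probability Th R} {Y : Type} {f : Y -> Th -> R} {y : nat -> Y}.
Implicit Types c : nat -> bool.
Local Notation mL := (mL prior f y).
Local Notation mP := (mP prior f y).
Local Notation ylik := (ylik prior f y).

(* [mP] divides by zero when [L(y^{a:b}) = 0]; then the nonnegative integrand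
   vanishes a.e., so [L(y^{a:(b+1)}) = 0] as well. *)
Lemma mL_mulP a b : (a <= b.+1)%N -> (forall v th, 0 <= f v th) ->
  prior.-integrable setT (fun th => (\prod_(a <= s < b.+1) f (y s) th)%:E) ->
  prior.-integrable setT (fun th => (\prod_(a <= s < b.+2) f (y s) th)%:E) ->
  mL a b * mP a b.+1 = mL a b.+1.
Proof.
move=> le_ab f_ge0 int_ab int_ab1; rewrite /mP /=.
have [mL0|nz] := eqVneq (mL a b) 0; last by rewrite mulrC divfK.
have prod_recr th : \prod_(a <= s < b.+2) f (y s) th =
    (\prod_(a <= s < b.+1) f (y s) th) * f (y b.+1) th by rewrite big_nat_recr.
rewrite mL0 mul0r /Defs.mL (boolp.funext prod_recr).
symmetry; apply: Rintegral_mulr_eq0 int_ab _ mL0 => [th|].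
  by apply: prodr_ge0.
by apply: eq_integrable int_ab1 => // th _; rewrite prod_recr.
Qed.

Lemma ylik_extend_true c n : ylik (extend c n true) n.+1 = ylik c n * mL n.+1 n.+1.
Proof.
rewrite /Defs.ylik big_mkcond big_nat_recr //= [in RHS]big_mkcond /=.
rewrite extend_last [segend _ _ n.+1]/segend subnn addn0; congr (_ * _).
apply: eq_big_nat => s /andP[_ le_sn]; rewrite extend_le //.
case: ifP => // _; rewrite segend_extend //; case: ifP => // /negbT/hasPn no_c.
by rewrite addn0 segend_no_change // => u u_in; apply/negbTE/no_c; rewrite mem_iota; lia.
Qed.

Lemma ylik_last_segment c m s0 : (1 <= s0 <= m)%N -> c s0 ->
  (forall s, (s0 < s <= m)%N -> c s = false) ->
  ylik c m = (\prod_(1 <= s < s0 | c s) mL s (segend c m s)) * mL s0 m.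
Proof.
move=> /andP[le_1s0 le_s0m] c_s0 no_change.
rewrite /Defs.ylik (big_cat_nat (n := s0)) //=; last lia.
rewrite [X in _ * X]big_ltn_cond /=; last lia.
rewrite c_s0 segend_no_change //.
have -> : \prod_(s0.+1 <= s < m.+1 | c s) mL s (segend c m s) = 1.
  rewrite big_nat_cond big1 // => s /andP[/andP[lt_s0s le_sm]].
  by rewrite no_change ?lt_s0s.
by rewrite mulr1.
Qed.

Lemma ylik_extend_false c n s0 : (1 <= s0 <= n)%N -> c s0 ->
  (forall s, (s0 < s <= n)%N -> c s = false) ->
  mL s0 n * mP s0 n.+1 = mL s0 n.+1 ->
  ylik (extend c n false) n.+1 = ylik c n * mP s0 n.+1.
Proof.
move=> s0_in c_s0 no_change mL_succ.
have /andP[le_1s0 le_s0n] := s0_in.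
rewrite (ylik_last_segment _ _ _ s0_in c_s0 no_change) -mulrA mL_succ.
rewrite (ylik_last_segment (extend c n false) n.+1 s0); first last.
- move=> s /andP[lt_s0s]; rewrite leq_eqVlt => /orP[/eqP->|le_sn].
    exact: extend_last.
  by rewrite extend_le ?no_change ?lt_s0s.
- by rewrite extend_le.
- by rewrite le_1s0 (leq_trans le_s0n).
congr (_ * _); rewrite big_mkcond [RHS]big_mkcond; apply: eq_big_nat => s s_in.
rewrite extend_le; last lia.
case: ifP => // _; rewrite segend_extend; last lia.
suff -> : has c (iota s.+1 (n - s)) by [].
by apply/hasP; exists s0; rewrite ?mem_iota //; lia.
Qed.

End Likelihood.

Section Recursions.
Context {R : realType} {d : measure_display} {Th : measurableType d}
  {prior : probability Th R} {Y : Type} {f : Y -> Th -> R} {y : nat -> Y}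
  {Dt : nat} {p0 q0 : R}.
Implicit Types c : nat -> bool.
Local Notation mL := (mL prior f y).
Local Notation mP := (mP prior f y).
Local Notation joint := (joint Dt p0 q0 prior f y).

Lemma cprob_extend c n b : (0 < n)%N ->
  cprob Dt p0 q0 (extend c n b) n.+1 = cprob Dt p0 q0 c n *
    (if openb Dt (extend c n b) n.+1 then (if b then q0 else 1 - q0)
     else (if b then p0 else 1 - p0)).
Proof.
move=> n_gt0; rewrite /cprob big_nat_recr //= extend_last.
rewrite (gtn_eqF (n_gt0 : (1 < n.+1)%N)).
congr (_ * _); apply: eq_big_nat => s /andP[_ le_sn].
rewrite extend_le // (@openb_eq _ _ c) // => u le_us.
by rewrite extend_le // (leq_trans le_us).
Qed.

Definition Ga_event t r' r : pred (nat -> bool) := fun c =>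
  [&& runlen c t == r, anom Dt c (t - r), c (t - r - 1 - r')%N &
      [forall s : 'I_t, ((t - r - 1 - r' < s) && (s < t - r))%N ==> ~~ c s]].

Definition Hc_event t r' : pred (nat -> bool) := fun c =>
  (runlen c t == r') && ~~ anom Dt c (t - r').

Definition joint_term t (E : pred (nat -> bool)) c : R :=
  if E c then cprob Dt p0 q0 c t * ylik prior f y c t else 0.

Lemma joint_extend n E : joint n.+1 E =
  \sum_(cs : n.-tuple bool) (joint_term n.+1 E (extend (cfun cs) n true) +
                             joint_term n.+1 E (extend (cfun cs) n false)).
Proof.
by rewrite /Defs.joint big_tuple_rcons; apply: eq_bigr => cs _; rewrite big_bool !cfun_rcons.
Qed.

Lemma joint1T : joint 1 xpredT = mL 1 1.
Proof.
rewrite joint_extend (big_pred1 [tuple]) => [|cs]; last exact/esym/eqP/tuple0.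
rewrite /joint_term /= ylik_extend_true /cprob !big_nat1 !extend_last /=.
by rewrite /Defs.ylik big_geq // mul0r addr0 !mul1r.
Qed.

Lemma joint_term_Hc0_false c n :
  joint_term n.+1 (Hc_event n.+1 0) (extend c n false) = 0.
Proof. by rewrite /joint_term /Hc_event runlen_extend. Qed.

Lemma joint_term_Hc_2_0_true c :
  joint_term 2 (Hc_event 2 0) (extend c 1 true) = joint_term 1 xpredT c * mL 2 2 * p0.
Proof.
rewrite /joint_term /Hc_event runlen_extend anomS !openb_small // andbF /=.
by rewrite cprob_extend // openb_small // ylik_extend_true; ring.
Qed.

Lemma Hc_2_0 : Hc Dt p0 q0 prior f y 2 0 = mL 1 1 * mL 2 2 * p0.
Proof.
have -> : Hc Dt p0 q0 prior f y 2 0 = joint 2 (Hc_event 2 0) by [].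
rewrite joint_extend -joint1T /Defs.joint !mulr_suml.
by apply: eq_bigr => cs _; rewrite joint_term_Hc0_false addr0 joint_term_Hc_2_0_true.
Qed.

Lemma Ga_event0_extend_true c n r' : (r'.+2 <= n)%N -> (r' < Dt)%N ->
  Ga_event n.+1 r' 0 (extend c n true) = Hc_event n r' c.
Proof.
move=> le_r'n lt_r'Dt; have lt_r'n : (r' < n)%N by lia.
rewrite /Ga_event /Hc_event runlen_extend subn0 anomS extend_last /=.
rewrite (_ : (n.+1 - 1 - r' = n - r')%N); last lia.
have le_s0n : (n - r' <= n)%N := leq_subr r' n.
rewrite extend_le //.
case: (runlenP c lt_r'n) => [[c_s0 no_change]|not_last] /=.
  rewrite (openb_last le_s0n) ?extend_le ?anom_extend //; last first.
    by move=> s /andP[lt_s0s le_sn]; rewrite extend_le // no_change ?lt_s0s.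
  have -> : (2 <= n - r')%N by lia.
  have -> : (n.+1 - Dt <= n - r')%N by lia.
  have -> : [forall s : 'I_n.+1, (n - r' < s < n.+1)%N ==> ~~ extend c n true s].
    apply/forall_betweenP => // s /andP[lt_s0s lt_sn].
    by rewrite extend_le // no_change ?lt_s0s.
  by rewrite c_s0 /= andbT.
apply/negbTE/and3P => -[_ c_s0 /(forall_betweenP (leqnn _)) no_change].
apply: not_last; split=> // s /andP[lt_s0s le_sn].
by rewrite -(extend_le c n true s le_sn) no_change ?lt_s0s.
Qed.

Lemma joint_term_Ga0_true c n r' : (r'.+2 <= n)%N -> (r' < Dt)%N ->
  joint_term n.+1 (Ga_event n.+1 r' 0) (extend c n true) =
  joint_term n (Hc_event n r') c * mL n.+1 n.+1 * q0.
Proof.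
move=> le_r'n lt_r'Dt; rewrite /joint_term -(Ga_event0_extend_true c n r' le_r'n lt_r'Dt).
case: ifP => [/and4P[_ anom_n1 _ _]|_]; last by rewrite !mul0r.
move: anom_n1; rewrite subn0 anomS extend_last /= => open_n1.
by rewrite cprob_extend ?open_n1 ?ylik_extend_true; [ring | lia].
Qed.

Lemma joint_term_Ga0_false c n r' :
  joint_term n.+1 (Ga_event n.+1 r' 0) (extend c n false) = 0.
Proof. by rewrite /joint_term /Ga_event runlen_extend. Qed.

Lemma Ga_event_extend_false c n r' r : (0 < r <= n)%N ->
  Ga_event n.+1 r' r (extend c n false) = Ga_event n r' r.-1 c.
Proof.
case/andP=> r_gt0 le_rn.
rewrite /Ga_event runlen_extend (_ : (n.+1 - r = n - r.-1)%N); last lia.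
set s0 := (n - r.-1)%N; have le_s0n : (s0 <= n)%N := leq_subr _ n.
rewrite anom_extend // extend_le; last lia.
congr [&& _, _, _ & _]; first by rewrite -[in LHS](prednK r_gt0).
apply/(forall_betweenP (leqW le_s0n))/(forall_betweenP le_s0n) => no_change s s_in.
  have le_sn : (s <= n)%N by lia.
  by rewrite -(extend_le c n false s le_sn) no_change.
by rewrite extend_le ?no_change //; lia.
Qed.

Lemma joint_term_Ga_true c n r' r : (0 < r)%N ->
  joint_term n.+1 (Ga_event n.+1 r' r) (extend c n true) = 0.
Proof. by case: r => // r _; rewrite /joint_term /Ga_event runlen_extend. Qed.

Lemma joint_term_Ga_false c n r' r : (0 < r <= n)%N ->
  mL (n.+1 - r) n * mP (n.+1 - r) n.+1 = mL (n.+1 - r) n.+1 ->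
  joint_term n.+1 (Ga_event n.+1 r' r) (extend c n false) =
  joint_term n (Ga_event n r' r.-1) c * mP (n.+1 - r) n.+1 * (1 - p0).
Proof.
move=> r_in mL_succ; rewrite /joint_term Ga_event_extend_false //.
case: ifP => [/and4P[runlen_r anom_s0 _ _]|_]; last by rewrite !mul0r.
have /andP[r_gt0 le_rn] := r_in.
have lt_rn : (r.-1 < n)%N by lia.
move/(runlenP c lt_rn): runlen_r => [c_s0 no_change].
rewrite (_ : (n - r.-1 = n.+1 - r)%N) in c_s0 no_change anom_s0; last lia.
set s0 := (n.+1 - r)%N in mL_succ c_s0 no_change anom_s0 *.
have s0_in : (1 <= s0 <= n)%N by lia.
have le_s0n : (s0 <= n)%N by lia.
rewrite cprob_extend; last lia.
rewrite (openb_last le_s0n) ?extend_le ?anom_extend ?anom_s0 ?andbF //; last first.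
  by move=> s /andP[lt_s0s le_sn]; rewrite extend_le // no_change ?lt_s0s.
by rewrite (ylik_extend_false _ _ _ s0_in c_s0 no_change mL_succ); ring.
Qed.

Lemma Ga_succ0 n r' : (r'.+2 <= n)%N -> (r' < Dt)%N ->
  Ga Dt p0 q0 prior f y n.+1 r' 0 = Hc Dt p0 q0 prior f y n r' * mL n.+1 n.+1 * q0.
Proof.
move=> le_r'n lt_r'Dt.
have -> : Ga Dt p0 q0 prior f y n.+1 r' 0 = joint n.+1 (Ga_event n.+1 r' 0) by [].
rewrite joint_extend /Hc /Defs.joint !mulr_suml; apply: eq_bigr => cs _.
by rewrite joint_term_Ga0_true // joint_term_Ga0_false addr0.
Qed.

Lemma Ga_succ n r' r : (0 < r <= n)%N ->
  mL (n.+1 - r) n * mP (n.+1 - r) n.+1 = mL (n.+1 - r) n.+1 ->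
  Ga Dt p0 q0 prior f y n.+1 r' r =
  Ga Dt p0 q0 prior f y n r' r.-1 * mP (n.+1 - r) n.+1 * (1 - p0).
Proof.
move=> r_in mL_succ; have /andP[r_gt0 _] := r_in.
have -> : Ga Dt p0 q0 prior f y n.+1 r' r = joint n.+1 (Ga_event n.+1 r' r) by [].
rewrite joint_extend /Ga /Defs.joint !mulr_suml; apply: eq_bigr => cs _.
by rewrite joint_term_Ga_true // joint_term_Ga_false // add0r.
Qed.

End Recursions.

Theorem theorem3 (R : realType) (T Dt : nat) (p0 q0 : R)
  (d : measure_display) (Th : measurableType d) (prior : probability Th R)
  (Y : Type) (f : Y -> Th -> R) (y : nat -> Y) :
  (3 <= T)%N -> (1 <= Dt)%N ->
  0 < p0 < 1 -> 0 < q0 < 1 ->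
  (forall v th, 0 <= f v th) ->
  (forall a b : nat, (1 <= a)%N -> (a <= b)%N -> (b <= T)%N ->
     prior.-integrable setT
       (fun th => (\prod_(a <= s < b.+1) f (y s) th)%:E)) ->
  Ga Dt p0 q0 prior f y 3 0 0
    = mL prior f y 1 1 * mL prior f y 2 2 * mL prior f y 3 3 * p0 * q0
  /\
  (forall t r r' : nat, (3 < t)%N -> (t <= T)%N -> (r <= t - 3)%N ->
     (r' <= minn (Dt - 1) (t - r - 3))%N ->
     Ga Dt p0 q0 prior f y t r' r =
       (if (0 < r)%N then
          Ga Dt p0 q0 prior f y t.-1 r' r.-1 * mP prior f y (t - r) t * (1 - p0)
        else
          Hc Dt p0 q0 prior f y t.-1 r' * mL prior f y t t * q0)).
Proof.
move=> _ Dt_gt0 _ _ f_ge0 int_f; split.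
  by rewrite Ga_succ0 // Hc_2_0; ring.
move=> [//|n] [|r] r' lt3t le_tT le_r le_r' /=.
  by rewrite Ga_succ0 //; lia.
rewrite Ga_succ //; first lia.
by apply: mL_mulP => //; [lia | apply: int_f; lia | apply: int_f; lia].
Qed.
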